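(* Let $\Pi$ be a program with nested expressions and $X$ a set of atoms. If $X\not\models\Pi$, then $\Pi^X$ is classically equivalent to $\bot$. If $X\models\Pi$, then $\Pi^X$ is classically equivalent to the program obtained from $\Pi^{\underline X}$ by replacing every occurrence of every atom not belonging to $X$ by $\bot$.
   Context: Fix a set of propositional atoms. Formulas are built from atoms and $\bot$ using the binary connectives $\wedge,\vee,\to$; $\top$ abbreviates $\bot\to\bot$, $\neg F$ abbreviates $F\to\bot$, and $F\leftrightarrow G$ abbreviates $(F\to G)\wedge(G\to F)$. A theory is a set of formulas. Interpretations are sets $X$ of atoms, and $X\models F$ denotes classical satisfaction (an atom $a$ is true iff $a\in X$). The reduct $F^X$ of a formula $F$ relative to a set $X$ of atoms is defined recursively: $\bot^X=\bot$; for an atom $a$, $a^X=a$ if $a\in X$ and $a^X=\bot$ otherwise; for $\otimes\in\{\wedge,\vee,\to\}$, $(F\otimes G)^X=F^X\otimes G^X$ if $X\models F\otimes G$, and $(F\otimes G)^X=\bot$ otherwise. For a theory $\Gamma$, $\Gamma^X=\{F^X:F\in\Gamma\}$. A nested expression is a formula containing no implications other than those of the form $F\to\bot$ (i.e. $\neg F$) or $\bot\to\bot$ (i.e. $\top$). A rule with nested expressions is $F\leftarrow G$ with $F,G$ nested expressions, identified with the formula $G\to F$; a program with nested expressions is a set of such rules (so it is also a theory). The reduct $\Pi^{\underline X}$ (in the sense of Lifschitz, Tang and Turner 1999) is obtained from $\Pi$ by replacing, in each rule, each maximal subformula of the form $\neg F$ by $\top$ if $X\models\neg F$ and by $\bot$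 otherwise. *)

Set Implicit Arguments.

Inductive form (A : Type) : Type :=
| Bot : form A
| Atom : A -> form A
| And : form A -> form A -> form A
| Or  : form A -> form A -> form A
| Imp : form A -> form A -> form A.

Arguments Bot {A}.

Definition Top {A : Type} : form A := Imp Bot Bot.
Definition Neg {A : Type} (F : form A) : form A := Imp F Bot.

(* An interpretation is a set of atoms, given by its characteristic function. *)
Definition interp (A : Type) := A -> bool.

Fixpoint sat {A : Type} (X : interp A) (F : form A) : bool :=
  match F with
  | Bot => false
  | Atom a => X a
  | And F G => sat X F && sat X G
  | Or F G => sat X F || sat X G
  | Imp F G => negb (sat X F) || sat X G
  end.

Definition theory (A : Type) := form A -> Prop.

Definition sat_theory {A : Type} (X : interp A) (T : theory A) : Prop :=
  forall F, T F -> sat X F = true.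

Definition class_equiv {A : Type} (T1 T2 : theory A) : Prop :=
  forall Y : interp A, sat_theory Y T1 <-> sat_theory Y T2.

Definition bot_theory (A : Type) : theory A := fun F => F = Bot.

Fixpoint reduct {A : Type} (X : interp A) (F : form A) : form A :=
  match F with
  | Bot => Bot
  | Atom a => if X a then Atom a else Bot
  | And F1 F2 => if sat X F then And (reduct X F1) (reduct X F2) else Bot
  | Or F1 F2 => if sat X F then Or (reduct X F1) (reduct X F2) else Bot
  | Imp F1 F2 => if sat X F then Imp (reduct X F1) (reduct X F2) else Bot
  end.

Definition reduct_theory {A : Type} (X : interp A) (T : theory A) : theory A :=
  fun H => exists F, T F /\ H = reduct X F.

(* Nested expressions: the only implications are of the form F -> bot
   (which includes top = bot -> bot). *)
Fixpoint nested {A : Type} (F : form A) : Prop :=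
  match F with
  | Bot => True
  | Atom _ => True
  | And F1 F2 => nested F1 /\ nested F2
  | Or F1 F2 => nested F1 /\ nested F2
  | Imp F1 F2 => nested F1 /\ F2 = Bot
  end.

(* A rule  F <- G  (F, G nested) is the formula G -> F; a program is a set
   of such rules. *)
Definition is_rule {A : Type} (R : form A) : Prop :=
  exists G F, nested G /\ nested F /\ R = Imp G F.

Definition program {A : Type} (P : theory A) : Prop :=
  forall R, P R -> is_rule R.

(* Lifschitz-Tang-Turner reduct of a nested expression: each maximal
   subformula of the form (neg F) is replaced by top if X |= neg F and by
   bot otherwise. *)
Fixpoint ltt {A : Type} (X : interp A) (F : form A) : form A :=
  match F with
  | Bot => Bot
  | Atom a => Atom a
  | And F1 F2 => And (ltt X F1) (ltt X F2)
  | Or F1 F2 => Or (ltt X F1) (ltt X F2)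
  | Imp F1 Bot => if sat X (Neg F1) then Top else Bot
  | Imp F1 F2 => Imp (ltt X F1) (ltt X F2)  (* not a nested expression *)
  end.

Definition ltt_rule {A : Type} (X : interp A) (R : form A) : form A :=
  match R with
  | Imp G F => Imp (ltt X G) (ltt X F)
  | _ => R
  end.

Definition ltt_program {A : Type} (X : interp A) (P : theory A) : theory A :=
  fun H => exists R, P R /\ H = ltt_rule X R.

Fixpoint kill {A : Type} (X : interp A) (F : form A) : form A :=
  match F with
  | Bot => Bot
  | Atom a => if X a then Atom a else Bot
  | And F1 F2 => And (kill X F1) (kill X F2)
  | Or F1 F2 => Or (kill X F1) (kill X F2)
  | Imp F1 F2 => Imp (kill X F1) (kill X F2)
  end.

Definition kill_theory {A : Type} (X : interp A) (T : theory A) : theory A :=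
  fun H => exists F, T F /\ H = kill X F.

From Stdlib Require Import Bool Classical.

(* Two facts about a single formula drive everything:
   - if X does not satisfy F, then the reduct F^X is literally bot;
   - if F is a nested expression, then F^X and the formula obtained from the
     LTT reduct of F by killing the atoms outside X have the same models,
     whatever X is (induction on F: outside X both sides collapse to bot,
     and a negation under X evaluates to the same truth value as its
     replacement top/bot).
   Lifting the second fact to rules gives, for a rule R with X |= R, that
   R^X and kill X (R^{underline X}) have the same models.  Both parts of the
   proposition then follow by comparing theories through images: a theory
   containing bot is equivalent to {bot}, and two images of the same program
   under pointwise equivalent maps are equivalent theories. *)

(* The image of a theory under a map on formulas; reduct_theory,
   ltt_program and kill_theory are all of this form. *)
Definition image {A : Type} (f : form A -> form A) (T : theory A) : theory A :=
  fun H => exists F, T F /\ H = f F.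

Lemma sat_theory_image {A : Type} (Y : interp A) f (T : theory A) :
  sat_theory Y (image f T) <-> forall F, T F -> sat Y (f F) = true.
Proof.
  split.
  - intros HY F HF. apply HY. exists F. auto.
  - intros HY H [F [HF ->]]. auto.
Qed.

Lemma sat_theory_image_comp {A : Type} (Y : interp A) f g (T : theory A) :
  sat_theory Y (image g (image f T)) <->
  sat_theory Y (image (fun F => g (f F)) T).
Proof.
  rewrite !sat_theory_image. split; intros HY F HF.
  - apply HY. exists F. auto.
  - destruct HF as [F' [HF' ->]]. auto.
Qed.

Lemma image_class_equiv {A : Type} f g (T : theory A) :
  (forall F, T F -> forall Y, sat Y (f F) = sat Y (g F)) ->
  class_equiv (image f T) (image g T).
Proof.
  intros Hfg Y. rewrite !sat_theory_image.
  split; intros HY F HF; [rewrite <- Hfg | rewrite Hfg]; auto.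
Qed.

Lemma class_equiv_bot {A : Type} (T : theory A) :
  T Bot -> class_equiv T (@bot_theory A).
Proof.
  intros HT Y. split; intros HY.
  - discriminate (HY Bot HT).
  - discriminate (HY Bot eq_refl).
Qed.

Lemma not_sat_theory_witness {A : Type} (X : interp A) (T : theory A) :
  ~ sat_theory X T -> exists F, T F /\ sat X F = false.
Proof.
  intros Hn. apply NNPP. intros Hno. apply Hn. intros F HF.
  destruct (sat X F) eqn:E; [reflexivity|].
  exfalso. apply Hno. exists F. auto.
Qed.

Lemma reduct_unsat {A : Type} (X : interp A) F :
  sat X F = false -> reduct X F = Bot.
Proof. destruct F; simpl; intros H; rewrite ?H; reflexivity. Qed.

Lemma reduct_nested_equiv {A : Type} (X Y : interp A) F :
  nested F -> sat Y (reduct X F) = sat Y (kill X (ltt X F)).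
Proof.
  induction F as [|a|F1 IH1 F2 IH2|F1 IH1 F2 IH2|F1 IH1 F2 IH2];
    simpl; intros Hn.
  - reflexivity.
  - destruct (X a); reflexivity.
  - destruct Hn as [H1 H2]. rewrite <- (IH1 H1), <- (IH2 H2).
    destruct (sat X F1) eqn:E1; destruct (sat X F2) eqn:E2; simpl;
      rewrite ?(reduct_unsat X F1 E1), ?(reduct_unsat X F2 E2); simpl;
      auto using andb_false_r.
  - destruct Hn as [H1 H2]. rewrite <- (IH1 H1), <- (IH2 H2).
    destruct (sat X F1) eqn:E1; destruct (sat X F2) eqn:E2; simpl;
      rewrite ?(reduct_unsat X F1 E1), ?(reduct_unsat X F2 E2); reflexivity.
  - (* a negation F1 -> bot: under X both sides are top or both are bot *)
    destruct Hn as [H1 ->]. simpl.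
    destruct (sat X F1) eqn:E1; simpl; [reflexivity|].
    rewrite (reduct_unsat X F1 E1). reflexivity.
Qed.

(* Lifting to rules satisfied by X: the reduct of G -> F is then the
   implication of the reducts of body and head. *)
Lemma reduct_rule_equiv {A : Type} (X Y : interp A) R :
  is_rule R -> sat X R = true ->
  sat Y (reduct X R) = sat Y (kill X (ltt_rule X R)).
Proof.
  intros [G [F [HG [HF ->]]]] HR. simpl in HR |- *. rewrite HR. simpl.
  rewrite (reduct_nested_equiv X Y G HG), (reduct_nested_equiv X Y F HF).
  reflexivity.
Qed.

Theorem proposition1 (A : Type) (P : theory A) (X : interp A) :
  program P ->
  (~ sat_theory X P -> class_equiv (reduct_theory X P) (@bot_theory A)) /\
  (sat_theory X P ->
     class_equiv (reduct_theory X P) (kill_theory X (ltt_program X P))).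
Proof.
  intros HP. split.
  - (* some rule R is false in X, so bot = R^X belongs to Pi^X *)
    intros Hn. destruct (not_sat_theory_witness X P Hn) as [R [HR HRX]].
    apply class_equiv_bot. exists R. split; [exact HR|].
    symmetry. exact (reduct_unsat X R HRX).
  - (* kill X (Pi^{underline X}) is the image of P under kill X o ltt_rule X,
       which agrees semantically with the reduct on each rule *)
    intros HX Y.
    change (kill_theory X (ltt_program X P))
      with (image (kill X) (image (ltt_rule X) P)).
    rewrite sat_theory_image_comp.
    apply (image_class_equiv (reduct X)).
    intros R HR Z. exact (reduct_rule_equiv X Z R (HP R HR) (HX R HR)).
Qed.
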